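(* Let $\mathfrak{C}=(U,M,I,N,J)$ be a formal decision context and $\mathfrak{C}^c=(U,M,I,N,\neg J)$ its complement. Then: (1) $\mathfrak{R}_{II}(\mathfrak{C})=\{(O,C)\rightarrow(Y,D)\mid (O,C)\rightarrow(Y,N\setminus D)\in\mathfrak{R}_I(\mathfrak{C}^c)\}$; (2) $\overline{\mathfrak{R}}_{II}(\mathfrak{C})=\{(O,C)\rightarrow(Y,D)\mid (O,C)\rightarrow(Y,N\setminus D)\in\overline{\mathfrak{R}}_I(\mathfrak{C}^c)\}$. Here $\mathfrak{R}_I(\mathfrak{C}^c)$ and $\overline{\mathfrak{R}}_I(\mathfrak{C}^c)$ are the sets of all I-decision rules and all necessary I-decision rules of $\mathfrak{C}^c$.
   Context: Formal context $(U,M,I)$: $U$ and $M$ are finite nonempty sets and $I\subseteq U\times M$. For $O\subseteq U$ and $C\subseteq M$ define: - $O^{\uparrow}=\{a\mid\forall x\in O\,((x,a)\in I)\}$ and $C^{\downarrow}=\{x\mid\forall a\in C\,((x,a)\in I)\}$; - $O^{\lozenge}=\{a\in M\mid\exists x\in O\,((x,a)\in I)\}$ and $C^{\square}=\{x\in U\mid\forall a\in M\,((x,a)\in I\Rightarrow a\in C)\}$; - $O^{\square}=\{a\in M\mid\forall x\in U\,((x,a)\in I\Rightarrow x\in O)\}$ and $C^{\lozenge}=\{x\in U\mid\exists a\in C\,((x,a)\in I)\}$. The corresponding pairs are: formal concepts $(O,C)$ with $O^\uparrow=C$ and $C^\downarrow=O$ (set $L$); object-oriented concepts with $O^\square=C$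 and $C^\lozenge=O$ (set $L_O$); property-oriented concepts with $O^\lozenge=C$ and $C^\square=O$ (set $L_P$). A formal decision context $\mathfrak{C}=(U,M,I,N,J)$ has conditional context $\mathfrak{C}_M=(U,M,I)$ and decision context $\mathfrak{C}_N=(U,N,J)$, with $M\cap N=\emptyset$. Its complement is $\mathfrak{C}^c=(U,M,I,N,\neg J)$, where $(x,t)\in\neg J$ iff $(x,t)\notin J$. An I-decision rule of a formal decision context is $(O,C)\rightarrow(Y,D)$ with $(O,C)\in L_O$ of the conditional context, $(Y,D)\in L$ of the decision context, $O\subseteq Y$, $O\ne\emptyset$ and $Y\ne U$. A II-decision rule of $\mathfrak{C}$ is $(O,C)\rightarrow(Y,D)$ with $(O,C)\in L_O(\mathfrak{C}_M)$, $(Y,D)\in L_P(\mathfrak{C}_N)$, $O\subseteq Y$, and (as the paper restricts II-decision rules in applications) $O\ne\emptyset$ and $Y\ne U$; the set of these is $\mathfrak{R}_{II}(\mathfrak{C})$. For either kind of rule, implication is defined by $(O_1,C_1)\rightarrow(Y_1,D_1)\Rightarrow(O_2,C_2)\rightarrow(Y_2,D_2)$ iff $O_2\subseteq O_1\subseteq Y_1\subseteq Y_2$. A rule $r$ is necessary in its rule set if no other rule $r_1$ of that set satisfies $r_1\Rightarrow r$. $\overline{\mathfrak{R}}$ denotes the set of necessary rules. *)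

From mathcomp Require Import all_boot.
Set Implicit Arguments. Unset Strict Implicit. Unset Printing Implicit Defensive.

Section Ops.
Variables (U A : finType) (I : U -> A -> bool).

Definition up (X : {set U}) : {set A} := [set a | [forall x in X, I x a]].
Definition down (C : {set A}) : {set U} := [set x | [forall a in C, I x a]].
Definition diaO (X : {set U}) : {set A} := [set a | [exists x in X, I x a]].
Definition boxC (C : {set A}) : {set U} := [set x | [forall a, I x a ==> (a \in C)]].
Definition boxO (X : {set U}) : {set A} := [set a | [forall x, I x a ==> (x \in X)]].
Definition diaC (C : {set A}) : {set U} := [set x | [exists a in C, I x a]].

Definition is_concept (X : {set U}) (C : {set A}) : Prop :=
  up X = C /\ down C = X.
Definition is_oconcept (X : {set U}) (C : {set A}) : Prop :=
  boxO X = C /\ diaC C = X.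
Definition is_pconcept (X : {set U}) (C : {set A}) : Prop :=
  diaO X = C /\ boxC C = X.
End Ops.

Definition neg_rel (U N : finType) (J : U -> N -> bool) : U -> N -> bool :=
  fun x t => ~~ J x t.

(* a decision rule (X,C) -> (Y,D) is represented by the quadruple (X,C,Y,D) *)
Definition rule (U M N : finType) : Type :=
  (prod (prod (prod {set U} {set M}) {set U}) {set N}).

Definition RI (U M N : finType) (I : U -> M -> bool) (J : U -> N -> bool)
  (r : rule U M N) : Prop :=
  let: (X, C, Y, D) := r in
  [/\ is_oconcept I X C, is_concept J Y D, X \subset Y, X != set0 & Y != setT].

Definition RII (U M N : finType) (I : U -> M -> bool) (J : U -> N -> bool)
  (r : rule U M N) : Prop :=
  let: (X, C, Y, D) := r in
  [/\ is_oconcept I X C, is_pconcept J Y D, X \subset Y, X != set0 & Y != setT].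

Definition rule_implies (U M N : finType) (r1 r2 : rule U M N) : Prop :=
  let: (X1, C1, Y1, D1) := r1 in
  let: (X2, C2, Y2, D2) := r2 in
  [/\ X2 \subset X1, X1 \subset Y1 & Y1 \subset Y2].

Definition necessary (U M N : finType) (R : rule U M N -> Prop) (r : rule U M N) : Prop :=
  R r /\ ~ (exists r1, [/\ R r1, r1 <> r & rule_implies r1 r]).

(* Complementing the decision relation exchanges the two kinds of concepts of
   the decision context: for ~J one has Y^up = N \ Y^dia and (N \ D)^down = D^box,
   so (Y, D) is a property-oriented concept of J iff (Y, N \ D) is a formal
   concept of ~J.  Hence complementing the decision part of a rule is a
   bijection from II-rules of C onto I-rules of C^c; it is an involution that
   does not touch the sets compared by rule implication, so it also matches
   the necessary rules. *)
From mathcomp Require Import all_boot.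

Set Implicit Arguments.
Unset Strict Implicit.

Section NegatedRelation.
Variables (U N : finType) (J : U -> N -> bool).

Lemma up_neg_rel (Y : {set U}) : up (neg_rel J) Y = ~: diaO J Y.
Proof.
apply/setP=> a; rewrite !inE negb_exists; apply/eq_forallb=> x.
by rewrite /neg_rel; case: (x \in Y); case: (J x a).
Qed.

Lemma down_neg_relC (D : {set N}) : down (neg_rel J) (~: D) = boxC J D.
Proof.
apply/setP=> x; rewrite !inE; apply/eq_forallb=> a.
by rewrite /neg_rel inE; case: (a \in D); case: (J x a).
Qed.

Lemma pconcept_neg_relC (Y : {set U}) (D : {set N}) :
  is_pconcept J Y D <-> is_concept (neg_rel J) Y (~: D).
Proof.
rewrite /is_pconcept /is_concept up_neg_rel down_neg_relC.
split=> -[diaYD boxDY]; split=> //; first by rewrite diaYD.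
by rewrite -[diaO J Y]setCK diaYD setCK.
Qed.

End NegatedRelation.

Section NecessaryTransport.
Variables (U M N : finType).

Definition rule_setCD (r : rule U M N) : rule U M N :=
  let: (X, C, Y, D) := r in (X, C, Y, ~: D).

Lemma rule_setCDK : involutive rule_setCD.
Proof. by case=> [[[X C] Y] D] /=; rewrite setCK. Qed.

Lemma rule_implies_setCD (r1 r2 : rule U M N) :
  rule_implies (rule_setCD r1) (rule_setCD r2) <-> rule_implies r1 r2.
Proof. by case: r1 => [[[? ?] ?] ?]; case: r2 => [[[? ?] ?] ?]. Qed.

Lemma necessary_setCD (R1 R2 : rule U M N -> Prop) :
  (forall r, R1 r <-> R2 (rule_setCD r)) ->
  forall r, necessary R1 r -> necessary R2 (rule_setCD r).
Proof.
move=> R12 r [R1r not_implied]; split; first exact/R12.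
move=> [r1 [R2r1 r1_neq imp_r1]]; apply: not_implied.
exists (rule_setCD r1); split.
- by apply/R12; rewrite rule_setCDK.
- by move=> eq_r1; apply: r1_neq; rewrite -eq_r1 rule_setCDK.
- by apply/rule_implies_setCD; rewrite rule_setCDK.
Qed.

Lemma necessary_setCDE (R1 R2 : rule U M N -> Prop) :
  (forall r, R1 r <-> R2 (rule_setCD r)) ->
  forall r, necessary R1 r <-> necessary R2 (rule_setCD r).
Proof.
move=> R12 r; split; first exact: necessary_setCD.
have R21 r' : R2 r' <-> R1 (rule_setCD r').
  by move: (R12 (rule_setCD r')); rewrite rule_setCDK; apply: iff_sym.
by move/(necessary_setCD R21); rewrite rule_setCDK.
Qed.

End NecessaryTransport.

Lemma RII_RI_neg_rel (U M N : finType) (I : U -> M -> bool) (J : U -> N -> bool)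
  (r : rule U M N) :
  RII I J r <-> RI I (neg_rel J) (rule_setCD r).
Proof.
case: r => [[[X C] Y] D] /=.
by split=> -[? ? *]; split=> //; apply/pconcept_neg_relC.
Qed.

Theorem theorem4p7 (U M N : finType) (I : U -> M -> bool) (J : U -> N -> bool)
  (hU : 0 < #|U|) (hM : 0 < #|M|) (hN : 0 < #|N|) :
  (forall (X : {set U}) (C : {set M}) (Y : {set U}) (D : {set N}),
     RII I J (X, C, Y, D) <-> RI I (neg_rel J) (X, C, Y, ~: D)) /\
  (forall (X : {set U}) (C : {set M}) (Y : {set U}) (D : {set N}),
     necessary (RII I J) (X, C, Y, D) <->
     necessary (RI I (neg_rel J)) (X, C, Y, ~: D)).
Proof.
split=> X C Y D; first exact: (RII_RI_neg_rel I J (X, C, Y, D)).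
exact: (necessary_setCDE (RII_RI_neg_rel I J) (X, C, Y, D)).
Qed.
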